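(* Let $w_1, w_2 \geq 0$ with $w_1 + w_2 > 0$. Both for the class of sequential two-player weighted congestion games with affine costs, proportional cost functions and player weights $w_1,w_2$ (player 1 moving first), and for its subclass of network routing games, the price of anarchy (with respect to subgame-perfect equilibria) is equal to \[ 1 + \frac{w_1w_2}{w_1^2 + w_2^2}. \]
   Context: A weighted two-player congestion game with affine costs consists of a finite set $R$ of resources, coefficients $\alpha_r,\beta_r \geq 0$ for each $r\in R$, two players $i=1,2$ with weights $w_i\ge 0$, and for each player $i$ a nonempty finite set $\mathcal{A}_i \subseteq 2^R$ of actions. For an action profile $A=(A_1,A_2)$ the load of $r$ is $x_r(A)=\sum_{j:\, r\in A_j} w_j$. With proportional costs, player $i$ pays $C_i(A)=w_i\sum_{r\in A_i}(\alpha_r+\beta_r x_r(A))$. The social cost is $C(A)=C_1(A)+C_2(A)$. In a network routing game, $R$ is the arc set of a directed graph, player $i$ has a source $s_i$ and sink $t_i$, and $\mathcal{A}_i$ is the set of arc sets of directed $s_i$–$t_i$ paths. In the sequential game, player 1 (weight $w_1$) chooses $A_1$ first, then player 2 (weight $w_2$), knowing $A_1$, chooses $A_2$. A subgame-perfect equilibrium consists of a function $A_1\mapsto A_2^*(A_1)$ with $C_2(A_1,A_2^*(A_1))\le C_2(A_1,A_2)$ for all $A_1,A_2$, and an action $A_1^*$ with $C_1(A_1^*,A_2^*(A_1^* ))\le C_1(A_1,A_2^*(A_1))$ for all $A_1$; its outcome is $(A_1^*,A_2^*(A_1^* ))$. The price of anarchy of an instance is the maximum over subgame-perfect equilibrium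 outcomes $A$ of $C(A)/\min_{A'}C(A')$; the price of anarchy of a class is the supremum over all instances (with positive optimal social cost). *)

From HB Require Import structures.
From mathcomp Require Import all_boot all_order all_algebra.
From mathcomp Require Import reals.
Set Implicit Arguments. Unset Strict Implicit. Unset Printing Implicit Defensive.
Import Order.TTheory GRing.Theory Num.Theory.
Local Open Scope ring_scope.

Section CongestionGames.
Variables (R : realType) (T : finType).
Variables (alpha beta : T -> R) (w1 w2 : R).

Definition load (A1 A2 : {set T}) (r : T) : R :=
  (if r \in A1 then w1 else 0) + (if r \in A2 then w2 else 0).

Definition cost1 (A1 A2 : {set T}) : R :=
  w1 * \sum_(r in A1) (alpha r + beta r * load A1 A2 r).
Definition cost2 (A1 A2 : {set T}) : R :=
  w2 * \sum_(r in A2) (alpha r + beta r * load A1 A2 r).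
Definition social_cost (A1 A2 : {set T}) : R := cost1 A1 A2 + cost2 A1 A2.

Variables (Acts1 Acts2 : {set {set T}}).

Definition wf_game : Prop :=
  (forall r, 0 <= alpha r /\ 0 <= beta r) /\
  Acts1 != set0 /\ Acts2 != set0.

Definition spe_outcome (B1 B2 : {set T}) : Prop :=
  exists f : {set T} -> {set T},
    (forall A1, A1 \in Acts1 -> f A1 \in Acts2) /\
    (forall A1 A2, A1 \in Acts1 -> A2 \in Acts2 ->
        cost2 A1 (f A1) <= cost2 A1 A2) /\
    B1 \in Acts1 /\
    (forall A1, A1 \in Acts1 -> cost1 B1 (f B1) <= cost1 A1 (f A1)) /\
    B2 = f B1.

Definition is_opt (m : R) : Prop :=
  (exists A1 A2, A1 \in Acts1 /\ A2 \in Acts2 /\ social_cost A1 A2 = m) /\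
  (forall A1 A2, A1 \in Acts1 -> A2 \in Acts2 -> m <= social_cost A1 A2).

Definition instance_poa (r : R) : Prop :=
  exists m, is_opt m /\ 0 < m /\
    (exists B1 B2, spe_outcome B1 B2 /\ r = social_cost B1 B2 / m) /\
    (forall B1 B2, spe_outcome B1 B2 -> social_cost B1 B2 / m <= r).

End CongestionGames.

(* network routing games: resources are the arcs of a directed (multi)graph
   on vertex set V given by tail/head maps *)
Section Network.
Variables (T V : finType) (tl hd : T -> V).

Fixpoint walk_from (v t : V) (p : seq T) : bool :=
  match p with
  | [::] => v == t
  | e :: p' => (tl e == v) && walk_from (hd e) t p'
  end.

Definition st_path (s t : V) (p : seq T) : bool :=
  walk_from s t p && uniq (s :: map hd p).

Definition path_action_set (s t : V) (Acts : {set {set T}}) : Prop :=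
  forall P : {set T},
    P \in Acts <-> exists p : seq T, st_path s t p /\ P = [set e in p].
End Network.

Definition is_network_game (T : finType) (Acts1 Acts2 : {set {set T}}) : Prop :=
  exists (V : finType) (tl hd : T -> V) (s1 t1 s2 t2 : V),
    path_action_set tl hd s1 t1 Acts1 /\ path_action_set tl hd s2 t2 Acts2.

Definition poa_values (R : realType) (w1 w2 : R) (network : bool) (r : R) : Prop :=
  exists (T : finType) (alpha beta : T -> R) (Acts1 Acts2 : {set {set T}}),
    wf_game alpha beta Acts1 Acts2 /\
    (network -> is_network_game Acts1 Acts2) /\
    instance_poa alpha beta w1 w2 Acts1 Acts2 r.

Definition is_sup (R : realType) (S : R -> Prop) (x : R) : Prop :=
  (forall y, S y -> y <= x) /\
  (forall z, (forall y, S y -> y <= z) -> x <= z).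

(* Upper bound: let (B1, B2) be a subgame-perfect outcome, (O1, O2) any profile
   and F the follower's reply to O1.  The equilibrium conditions give
   C1(B) <= C1(O1, F), C2(B) <= C2(B1, F) and C2(O1, F) <= C2(O1, O2).  With
   D = w1^2 + w2^2, an inequality that holds resource by resource (checked on
   each of the 32 patterns of membership in B1, B2, O1, O2, F) yields
   D C2(B1, F) + (D + w1 w2) (C1(O1, F) - C1(O) - C2(O1, F)) <= w1 w2 C1(B),
   and combining the four inequalities gives D C(B) <= (D + w1 w2) C(O).
   Lower bound: in a five-arc network the leader can take a detour through an
   arc shared with the follower's detour; the follower then switches to a
   direct arc of equal cost, and the leader pays no more than on its own
   direct arc.  This outcome costs D + w1 w2 whereas the optimum costs D. *)
From HB Require Import structures.
From mathcomp Require Import all_boot all_order all_algebra.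
From mathcomp Require Import reals.
From mathcomp Require Import ring lra.
Set Implicit Arguments. Unset Strict Implicit. Unset Printing Implicit Defensive.
Import Order.TTheory GRing.Theory Num.Theory.
Local Open Scope ring_scope.

Definition poa_bound (R : realType) (w1 w2 : R) : R :=
  1 + w1 * w2 / (w1 ^+ 2 + w2 ^+ 2).

Lemma ler_ratio_1_add (R : realFieldType) (D k C m : R) :
  0 < D -> 0 < m -> D * C <= (D + k) * m -> C / m <= 1 + k / D.
Proof.
move=> D_gt0 m_gt0 le_Cm; rewrite ler_pdivrMr // -(ler_pM2l D_gt0).
have -> : D * ((1 + k / D) * m) = (D + k) * m by field; rewrite gt_eqF.
exact: le_Cm.
Qed.

Section UpperBound.
Variables (R : realType) (T : finType) (alpha beta : T -> R) (w1 w2 : R).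
Hypotheses (w1_ge0 : 0 <= w1) (w2_ge0 : 0 <= w2).
Hypothesis coef_ge0 : forall r, 0 <= alpha r /\ 0 <= beta r.

Local Notation D := (w1 ^+ 2 + w2 ^+ 2).
Local Notation load := (load w1 w2).
Local Notation cost1 := (cost1 alpha beta w1 w2).
Local Notation cost2 := (cost2 alpha beta w1 w2).

Definition resource_cost1 (A1 A2 : {set T}) (r : T) : R :=
  if r \in A1 then w1 * (alpha r + beta r * load A1 A2 r) else 0.
Definition resource_cost2 (A1 A2 : {set T}) (r : T) : R :=
  if r \in A2 then w2 * (alpha r + beta r * load A1 A2 r) else 0.

Lemma cost1E A1 A2 : cost1 A1 A2 = \sum_r resource_cost1 A1 A2 r.
Proof.
rewrite /cost1 big_mkcond mulr_sumr; apply: eq_bigr => r _.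
by rewrite /resource_cost1; case: ifP; rewrite ?mulr0.
Qed.

Lemma cost2E A1 A2 : cost2 A1 A2 = \sum_r resource_cost2 A1 A2 r.
Proof.
rewrite /cost2 big_mkcond mulr_sumr; apply: eq_bigr => r _.
by rewrite /resource_cost2; case: ifP; rewrite ?mulr0.
Qed.

Lemma resource_cost_ineq B1 B2 O1 O2 F r :
  D * resource_cost2 B1 F r
  + (D + w1 * w2) * (resource_cost1 O1 F r - resource_cost1 O1 O2 r
                      - resource_cost2 O1 F r)
  <= w1 * w2 * resource_cost1 B1 B2 r.
Proof.
rewrite /resource_cost1 /resource_cost2 /load.
have [a_ge0 b_ge0] := coef_ge0 r; move: (alpha r) (beta r) a_ge0 b_ge0 => a b ? ?.
(* The nonnegative monomials that make every case a linear problem. *)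
have ? : 0 <= a * (w1 * w1 * w2) by rewrite !mulr_ge0.
have ? : 0 <= a * (w1 * w2 * w2) by rewrite !mulr_ge0.
have ? : 0 <= b * (w1 * w1 * w1 * w2) by rewrite !mulr_ge0.
have ? : 0 <= b * (w1 * w1 * w2 * w2) by rewrite !mulr_ge0.
have ? : 0 <= b * (w1 * w2 * w2 * w2) by rewrite !mulr_ge0.
by case: (r \in B1); case: (r \in B2); case: (r \in O1); case: (r \in O2);
  case: (r \in F) => /=; lra.
Qed.

Lemma cost_ineq B1 B2 O1 O2 F :
  D * cost2 B1 F + (D + w1 * w2) * (cost1 O1 F - cost1 O1 O2 - cost2 O1 F)
  <= w1 * w2 * cost1 B1 B2.
Proof.
rewrite !cost1E !cost2E -!sumrB !mulr_sumr -big_split /=.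
by apply: ler_sum => r _; apply: resource_cost_ineq.
Qed.

Lemma spe_social_cost_le (Acts1 Acts2 : {set {set T}}) B1 B2 O1 O2 :
  spe_outcome alpha beta w1 w2 Acts1 Acts2 B1 B2 ->
  O1 \in Acts1 -> O2 \in Acts2 ->
  D * social_cost alpha beta w1 w2 B1 B2
  <= (D + w1 * w2) * social_cost alpha beta w1 w2 O1 O2.
Proof.
move=> [f [f_acts [f_best [B1_acts [B1_best ->]]]]] O1_acts O2_acts.
have D_ge0 : 0 <= D by rewrite addr_ge0 ?exprn_ge0.
have Dw_ge0 : 0 <= D + w1 * w2 by rewrite addr_ge0 ?mulr_ge0.
have leader := ler_wpM2l Dw_ge0 (B1_best O1 O1_acts).
have follower_B := ler_wpM2l D_ge0 (f_best B1 (f O1) B1_acts (f_acts O1 O1_acts)).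
have follower_O := ler_wpM2l Dw_ge0 (f_best O1 O2 O1_acts O2_acts).
have := cost_ineq B1 (f B1) O1 O2 (f O1).
rewrite /social_cost; lra.
Qed.

End UpperBound.

Lemma poa_values_le_bound (R : realType) (w1 w2 : R) network r :
  0 <= w1 -> 0 <= w2 -> 0 < w1 ^+ 2 + w2 ^+ 2 ->
  poa_values w1 w2 network r -> r <= poa_bound w1 w2.
Proof.
move=> w1_ge0 w2_ge0 D_gt0 [T [alpha [beta [Acts1 [Acts2 [[coef_ge0 _] [_ poa]]]]]]].
move: poa => [m [[[O1 [O2 [O1_acts [O2_acts <-]]]] _] [m_gt0 [[B1 [B2 [spe ->]]] _]]]].
rewrite /poa_bound; apply: ler_ratio_1_add => //.
exact: (spe_social_cost_le w1_ge0 w2_ge0 coef_ge0 spe O1_acts O2_acts).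
Qed.

Definition s1 : 'I_4 := @Ordinal 4 0 isT.
Definition s2 : 'I_4 := @Ordinal 4 1 isT.
Definition t1 : 'I_4 := @Ordinal 4 2 isT.
Definition t2 : 'I_4 := @Ordinal 4 3 isT.

Definition arc_s1t1 : 'I_5 := @Ordinal 5 0 isT.
Definition arc_s1s2 : 'I_5 := @Ordinal 5 1 isT.
Definition arc_s2t1 : 'I_5 := @Ordinal 5 2 isT.
Definition arc_t1t2 : 'I_5 := @Ordinal 5 3 isT.
Definition arc_s2t2 : 'I_5 := @Ordinal 5 4 isT.

Definition arc_tail (e : 'I_5) : 'I_4 :=
  match val e with 0 | 1 => s1 | 2 | 4 => s2 | _ => t1 end.
Definition arc_head (e : 'I_5) : 'I_4 :=
  match val e with 0 | 2 => t1 | 1 => s2 | _ => t2 end.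

Definition direct1 : {set 'I_5} := [set arc_s1t1].
Definition detour1 : {set 'I_5} := [set arc_s1s2; arc_s2t1].
Definition direct2 : {set 'I_5} := [set arc_s2t2].
Definition detour2 : {set 'I_5} := [set arc_s2t1; arc_t1t2].
Definition acts1 : {set {set 'I_5}} := [set direct1; detour1].
Definition acts2 : {set {set 'I_5}} := [set direct2; detour2].

Local Notation walk := (walk_from arc_tail arc_head).

Lemma walk_t2_t1 p : walk t2 t1 p = false.
Proof. by case: p => [|[[|[|[|[|[|k]]]]] ?] p]. Qed.

Lemma walk_t1_t1 p : walk t1 t1 p -> p = [::].
Proof. by case: p => [|[[|[|[|[|[|k]]]]] ?] p] //=; rewrite walk_t2_t1. Qed.

Lemma walk_s2_t1 p : walk s2 t1 p -> p = [:: arc_s2t1].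
Proof.
case: p => [|[[|[|[|[|[|k]]]]] ?] p] //=; last by rewrite walk_t2_t1.
by move/walk_t1_t1 => ->; apply/eqP.
Qed.

Lemma walk_s1_t1 p : walk s1 t1 p -> p = [:: arc_s1t1] \/ p = [:: arc_s1s2; arc_s2t1].
Proof.
case: p => [|[[|[|[|[|[|k]]]]] ?] p] //=.
  by move/walk_t1_t1 => ->; left; apply/eqP.
by move/walk_s2_t1 => ->; right; apply/eqP.
Qed.

Lemma walk_t2_t2 p : walk t2 t2 p -> p = [::].
Proof. by case: p => [|[[|[|[|[|[|k]]]]] ?] p]. Qed.

Lemma walk_t1_t2 p : walk t1 t2 p -> p = [:: arc_t1t2].
Proof.
case: p => [|[[|[|[|[|[|k]]]]] ?] p] //=.
by move/walk_t2_t2 => ->; apply/eqP.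
Qed.

Lemma walk_s2_t2 p : walk s2 t2 p -> p = [:: arc_s2t1; arc_t1t2] \/ p = [:: arc_s2t2].
Proof.
case: p => [|[[|[|[|[|[|k]]]]] ?] p] //=.
  by move/walk_t1_t2 => ->; left; apply/eqP.
by move/walk_t2_t2 => ->; right; apply/eqP.
Qed.

Lemma acts1_paths : path_action_set arc_tail arc_head s1 t1 acts1.
Proof.
move=> P; split.
  rewrite !inE => /orP [] /eqP ->.
    by exists [:: arc_s1t1]; split => //; apply/setP => e; rewrite !inE.
  by exists [:: arc_s1s2; arc_s2t1]; split => //; apply/setP => e; rewrite !inE.
move=> [p [/andP [/walk_s1_t1 [] -> _] ->]]; rewrite !inE; apply/orP.
  by left; apply/eqP/setP => e; rewrite !inE.
by right; apply/eqP/setP => e; rewrite !inE.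
Qed.

Lemma acts2_paths : path_action_set arc_tail arc_head s2 t2 acts2.
Proof.
move=> P; split.
  rewrite !inE => /orP [] /eqP ->.
    by exists [:: arc_s2t2]; split => //; apply/setP => e; rewrite !inE.
  by exists [:: arc_s2t1; arc_t1t2]; split => //; apply/setP => e; rewrite !inE.
move=> [p [/andP [/walk_s2_t2 [] -> _] ->]]; rewrite !inE; apply/orP.
  by right; apply/eqP/setP => e; rewrite !inE.
by left; apply/eqP/setP => e; rewrite !inE.
Qed.

Section LowerBound.
Variables (R : realType) (w1 w2 : R).

Definition arc_alpha (e : 'I_5) : R :=
  if e == arc_s1t1 then w1 else if e == arc_s2t2 then w1 + w2 else 0.
Definition arc_beta (e : 'I_5) : R := if e == arc_s2t1 then 1 else 0.

Local Notation cost1 := (cost1 arc_alpha arc_beta w1 w2).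
Local Notation cost2 := (cost2 arc_alpha arc_beta w1 w2).
Local Notation social_cost := (social_cost arc_alpha arc_beta w1 w2).

Ltac compute_cost :=
  rewrite /cost1 /cost2 !big_mkcond /= !big_ord_recl big_ord0 /load
    /direct1 /detour1 /direct2 /detour2 !inE /arc_alpha /arc_beta /=; ring.

Lemma cost1_direct1 A2 : cost1 direct1 A2 = w1 ^+ 2. Proof. compute_cost. Qed.
Lemma cost1_detour1_direct2 : cost1 detour1 direct2 = w1 ^+ 2. Proof. compute_cost. Qed.
Lemma cost1_detour1_detour2 : cost1 detour1 detour2 = w1 * (w1 + w2). Proof. compute_cost. Qed.
Lemma cost2_direct2 A1 : cost2 A1 direct2 = w2 * (w1 + w2). Proof. compute_cost. Qed.
Lemma cost2_direct1_detour2 : cost2 direct1 detour2 = w2 ^+ 2. Proof. compute_cost. Qed.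
Lemma cost2_detour1_detour2 : cost2 detour1 detour2 = w2 * (w1 + w2). Proof. compute_cost. Qed.

Definition example_costE :=
  (cost1_direct1, cost1_detour1_direct2, cost1_detour1_detour2,
   cost2_direct2, cost2_direct1_detour2, cost2_detour1_detour2).

Lemma example_coef_ge0 r :
  0 <= w1 -> 0 <= w2 -> 0 <= arc_alpha r /\ 0 <= arc_beta r.
Proof.
move=> w1_ge0 w2_ge0; rewrite /arc_alpha /arc_beta.
by split; repeat case: ifP; rewrite ?addr_ge0.
Qed.

Lemma social_cost_opt : social_cost direct1 detour2 = w1 ^+ 2 + w2 ^+ 2.
Proof. by rewrite /social_cost !example_costE. Qed.

Lemma example_opt :
  0 <= w1 -> 0 <= w2 -> is_opt arc_alpha arc_beta w1 w2 acts1 acts2 (w1 ^+ 2 + w2 ^+ 2).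
Proof.
move=> w1_ge0 w2_ge0; split.
  by exists direct1, detour2; rewrite social_cost_opt /acts1 /acts2 !inE !eqxx orbT.
move=> A1 A2; rewrite /acts1 /acts2 !inE => /orP [] /eqP -> /orP [] /eqP ->;
  rewrite /social_cost !example_costE; nra.
Qed.

Lemma detour1_neq_direct1 : (detour1 == direct1) = false.
Proof. by apply/negbTE/eqP => /setP /(_ arc_s1s2); rewrite !inE. Qed.

Definition follower_reply (A1 : {set 'I_5}) := if A1 == direct1 then detour2 else direct2.

Lemma example_spe :
  0 <= w1 -> 0 <= w2 -> spe_outcome arc_alpha arc_beta w1 w2 acts1 acts2 detour1 direct2.
Proof.
move=> w1_ge0 w2_ge0; exists follower_reply; rewrite /follower_reply.
split; last split; last split; last split.
- by move=> A1 _; case: ifP; rewrite /acts1 /acts2 !inE eqxx ?orbT.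
- move=> A1 A2; rewrite /acts1 /acts2 !inE => /orP [] /eqP -> /orP [] /eqP ->;
    rewrite ?detour1_neq_direct1 ?eqxx !example_costE; nra.
- by rewrite /acts1 /acts2 !inE eqxx orbT.
- move=> A1; rewrite /acts1 /acts2 !inE => /orP [] /eqP ->;
    rewrite ?detour1_neq_direct1 ?eqxx !example_costE; nra.
- by rewrite detour1_neq_direct1.
Qed.

Lemma poa_bound_attained network :
  0 <= w1 -> 0 <= w2 -> 0 < w1 ^+ 2 + w2 ^+ 2 -> poa_values w1 w2 network (poa_bound w1 w2).
Proof.
move=> w1_ge0 w2_ge0 D_gt0.
have coef_ge0 r := example_coef_ge0 r w1_ge0 w2_ge0.
exists 'I_5, arc_alpha, arc_beta, acts1, acts2; split; last split.
- split; first exact: coef_ge0.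
  by split; apply/set0Pn; [exists direct1 | exists direct2]; rewrite /acts1 /acts2 !inE eqxx.
- by move=> _; exists 'I_4, arc_tail, arc_head, s1, t1, s2, t2;
    split; [exact: acts1_paths | exact: acts2_paths].
exists (w1 ^+ 2 + w2 ^+ 2); split; first exact: example_opt.
split=> //; split.
  exists detour1, direct2; split; first exact: example_spe.
  by rewrite /social_cost !example_costE /poa_bound; field; rewrite gt_eqF.
move=> B1 B2 spe; apply: ler_ratio_1_add => //.
rewrite -[X in _ <= _ * X]social_cost_opt.
by apply: (spe_social_cost_le w1_ge0 w2_ge0 coef_ge0 spe); rewrite /acts1 /acts2 !inE eqxx ?orbT.
Qed.

End LowerBound.

Theorem theorem7 (R : realType) (w1 w2 : R) :
  0 <= w1 -> 0 <= w2 -> 0 < w1 + w2 ->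
  is_sup (poa_values w1 w2 false) (1 + w1 * w2 / (w1 ^+ 2 + w2 ^+ 2)) /\
  is_sup (poa_values w1 w2 true) (1 + w1 * w2 / (w1 ^+ 2 + w2 ^+ 2)).
Proof.
move=> w1_ge0 w2_ge0 w_gt0.
have D_gt0 : 0 < w1 ^+ 2 + w2 ^+ 2.
  have : 0 < (w1 + w2) ^+ 2 by rewrite exprn_gt0.
  nra.
rewrite -/(poa_bound w1 w2).
have is_sup_poa network : is_sup (poa_values w1 w2 network) (poa_bound w1 w2).
  split=> [r | b ub]; first exact: poa_values_le_bound.
  exact/ub/poa_bound_attained.
by split; apply: is_sup_poa.
Qed.
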